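(* Let $d\ge2$ and let $A\in\mathcal{B}(\mathbb{C}^d)$ be positive definite with eigenvalues $t_1,\dots,t_d>0$ counted with multiplicity. The following are equivalent: (i) $A=A_{T,C}$ for some power bounded $T\in\mathcal{B}(\mathbb{C}^d)$ of class $C_{11}$; (ii) $\frac1{t_1}+\dots+\frac1{t_d}=d$; (iii) there is an invertible $S\in\mathcal{B}(\mathbb{C}^d)$ all of whose column vectors are unit vectors such that $A=S^{*-1}S^{-1}=(SS^* )^{-1}$.
   Context: For a power bounded matrix $T$, the Cesàro asymptotic limit is $A_{T,C}=\lim_{n\to\infty}\frac1n\sum_{j=1}^nT^{*j}T^j$ (this limit exists). For a power bounded $T$, $\mathcal{H}_0(T)=\{x:\|T^nx\|\to0\}$; $T$ is of class $C_{1\cdot}$ if $\mathcal{H}_0(T)=\{0\}$, of class $C_{\cdot1}$ if $T^*$ is of class $C_{1\cdot}$, and of class $C_{11}$ if both hold. *)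

(* Complex numbers: an arbitrary numClosedFieldType C whose
   real elements are Dedekind complete (such a C is isomorphic to the complex field). *)
From HB Require Import structures.
From mathcomp Require Import all_boot all_order all_algebra.
Set Implicit Arguments. Unset Strict Implicit. Unset Printing Implicit Defensive.
Import Order.TTheory GRing.Theory Num.Theory.
Local Open Scope ring_scope.

Section Defs.
Variable C : numClosedFieldType.

Definition complete_reals : Prop :=
  forall S : C -> Prop,
    (forall x, S x -> x \is Num.real) -> (exists x, S x) ->
    (exists b, forall x, S x -> x <= b) ->
    exists s, (forall x, S x -> x <= s) /\
              (forall b, (forall x, S x -> x <= b) -> s <= b).

Variable d : nat.

Definition adjmx (m n : nat) (A : 'M[C]_(m, n)) : 'M[C]_(n, m) :=
  (map_mx Num.conj A)^T.

Definition vnorm (x : 'cV[C]_d) : C := sqrtC (\sum_i `|x i 0| ^+ 2).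

Definition conv (u : nat -> C) (l : C) : Prop :=
  forall eps : C, 0 < eps -> exists N : nat, forall n : nat, (N <= n)%N -> `|u n - l| < eps.

(* entrywise convergence of matrices (= norm convergence in finite dimension) *)
Definition mx_conv (M : nat -> 'M[C]_d) (L : 'M[C]_d) : Prop :=
  forall i j, conv (fun n => M n i j) (L i j).

Definition positive_definite (A : 'M[C]_d) : Prop :=
  adjmx A = A /\ forall x : 'cV[C]_d, x != 0 -> 0 < (adjmx x *m A *m x) 0 0.

Definition power_bounded (T : 'M[C]_d) : Prop :=
  exists M : C, forall (n : nat) (x : 'cV[C]_d), vnorm ((T ^+ n) *m x) <= M * vnorm x.

Definition in_H0 (T : 'M[C]_d) (x : 'cV[C]_d) : Prop :=
  conv (fun n => vnorm ((T ^+ n) *m x)) 0.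

Definition class_C1dot (T : 'M[C]_d) : Prop := forall x, in_H0 T x -> x = 0.
Definition class_Cdot1 (T : 'M[C]_d) : Prop := class_C1dot (adjmx T).
Definition class_C11 (T : 'M[C]_d) : Prop := class_C1dot T /\ class_Cdot1 T.

Definition cesaro_mean (T : 'M[C]_d) (n : nat) : 'M[C]_d :=
  (n%:R)^-1 *: \sum_(1 <= j < n.+1) (adjmx (T ^+ j) *m T ^+ j).

Definition is_cesaro_limit (T A : 'M[C]_d) : Prop := mx_conv (cesaro_mean T) A.

End Defs.

(* If A = A_{T,C} for a power bounded T, the telescoping identity
   T^* M_n T - M_n = (T^{*(n+1)} T^{n+1} - T^* T) / n for the Cesaro means M_n
   gives T^* A T = A, hence T^j A^{-1} T^{*j} = A^{-1}; so tr (A^{-1} M_n) = tr A^{-1}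
   for all n and, in the limit, d = tr A^{-1} = 1/t_1 + ... + 1/t_d.
   Conversely, write A^{-1} = P^* D^{-1} P with P unitary and put S = P^* D^{-1/2} W,
   where W is the Fourier matrix: W is unitary with all entries of modulus
   1/sqrt d, so S S^* = A^{-1} and every column of S has squared norm tr A^{-1} / d.
   Finally, given such an S, let T = S U S^{-1} with U = diag (1, w, ..., w^{d-1})
   for a primitive d-th root of unity w. As T is similar to a unitary it is power
   bounded and of class C_11, and its Cesaro means are S^{*-1} N_n S^{-1} where the
   entries of N_n = (1/n) sum_j U^{*j} S^* S U^j are the entries of S^* S times
   averages of geometric sequences of modulus one; these averages tend to 0 off the
   diagonal and to 1 on it, so N_n tends to the identity and M_n to the inverse
   of S S^*. *)

From HB Require Import structures.
From mathcomp Require Import all_boot all_order all_algebra.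
From mathcomp Require Import cyclic separable cyclotomic.
From Stdlib Require Import Classical.
Set Implicit Arguments. Unset Strict Implicit. Unset Printing Implicit Defensive.
Import Order.TTheory GRing.Theory Num.Theory.
Local Open Scope ring_scope.

Section Convergence.
Variable C : numClosedFieldType.
Implicit Types (u v : nat -> C) (a b c : C).

Lemma conv_cst a : conv (fun=> a) a.
Proof. by move=> e e0; exists 0%N => n _; rewrite subrr normr0. Qed.

Lemma conv_eq_from u v a (N : nat) :
  (forall n, (N <= n)%N -> u n = v n) -> conv u a -> conv v a.
Proof.
move=> euv cu e e0; have [M HM] := cu e e0; exists (maxn N M) => n.
by rewrite geq_max => /andP[nN nM]; rewrite -euv //; apply: HM.
Qed.

Lemma convD u v a b : conv u a -> conv v b -> conv (fun n => u n + v n) (a + b).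
Proof.
move=> cu cv e e0; have e2 : 0 < e / 2%:R by rewrite divr_gt0 ?ltr0n.
have [N1 H1] := cu _ e2; have [N2 H2] := cv _ e2.
exists (maxn N1 N2) => n; rewrite geq_max => /andP[n1 n2].
rewrite opprD addrACA (splitr e); apply: le_lt_trans (ler_normD _ _) _.
by rewrite ltrD ?H1 ?H2.
Qed.

Lemma convMl c u a : conv u a -> conv (fun n => c * u n) (c * a).
Proof.
move=> cu e e0; have [->|c0] := eqVneq c 0.
  by exists 0%N => n _; rewrite !mul0r subrr normr0.
have nc : 0 < `|c| by rewrite normr_gt0.
have [N HN] := cu (e / `|c|) (divr_gt0 e0 nc).
exists N => n /HN; rewrite -mulrBr normrM.
by rewrite ltr_pdivlMr // mulrC.
Qed.

Lemma convN u a : conv u a -> conv (fun n => - u n) (- a).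
Proof. by move=> cu e /cu[N HN]; exists N => n /HN; rewrite -opprD normrN. Qed.

Lemma conv_sum (I : finType) (F : I -> nat -> C) (L : I -> C) :
  (forall i, conv (F i) (L i)) -> conv (fun n => \sum_i F i n) (\sum_i L i).
Proof.
move=> cF; elim: (index_enum I) => [|i r IHr].
  apply: (conv_eq_from (u := fun=> 0) (N := 0)) => [n _|]; rewrite big_nil //.
  exact: conv_cst.
rewrite big_cons; apply: (conv_eq_from (N := 0)) (convD (cF i) IHr) => n _.
by rewrite big_cons.
Qed.

Lemma conv_unique u a b : conv u a -> conv u b -> a = b.
Proof.
move=> ca cb; apply/eqP; rewrite -subr_eq0; apply/negPn/negP => ab.
have e2 : 0 < `|a - b| / 2%:R by rewrite divr_gt0 ?normr_gt0 ?ltr0n.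
have [N1 H1] := ca _ e2; have [N2 H2] := cb _ e2; set n := maxn N1 N2.
have : `|a - b| < `|a - b|.
  rewrite {2}(splitr `|a - b|) {1}(_ : a - b = (a - u n) + (u n - b)).
    apply: le_lt_trans (ler_normD _ _) _.
    by rewrite (distrC a); apply: ltrD; [apply: H1 | apply: H2];
      rewrite ?leq_maxl ?leq_maxr.
  by rewrite addrA subrK.
by rewrite ltxx.
Qed.

Lemma conv0_le u v : conv v 0 -> (forall n, `|u n| <= `|v n|) -> conv u 0.
Proof.
move=> cv uv e /cv[N HN]; exists N => n /HN.
by rewrite !subr0; apply: le_lt_trans.
Qed.

Lemma mx_conv_mul d (M : nat -> 'M[C]_d) (L X Y : 'M[C]_d) :
  mx_conv M L -> mx_conv (fun n => X *m M n *m Y) (X *m L *m Y).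
Proof.
move=> cM i j; have eXY (N : 'M[C]_d) :
    (X *m N *m Y) i j = \sum_l Y l j * \sum_k X i k * N k l.
  by rewrite mxE; apply: eq_bigr => l _; rewrite mxE mulrC.
rewrite eXY; apply: (conv_eq_from (N := 0)) => [n _|]; first by rewrite eXY.
by apply: conv_sum => l; apply: convMl; apply: conv_sum => k; apply: convMl.
Qed.

Hypothesis hC : complete_reals C.

(* The completeness of the reals enters the whole proof only through this lemma. *)
Lemma complete_reals_archimedean b : b \is Num.real -> exists n : nat, b < n%:R.
Proof.
move=> br; apply: NNPP => no_n.
have le_b n : n%:R <= b.
  by rewrite real_leNgt ?realn //; apply/negP => lt_b; apply: no_n; exists n.
pose S (x : C) := exists n : nat, x = n%:R.
have [|||s [s_ub s_min]] := hC (S := S).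
- by move=> _ [n ->]; apply: realn.
- by exists 0, 0%N.
- by exists b => _ [n ->]; apply: le_b.
have : s <= s - 1.
  apply: s_min => _ [n ->]; rewrite lerBrDr natr1.
  by apply: s_ub; exists n.+1.
by rewrite lerDl oppr_ge0 ler10.
Qed.

Lemma conv_divn_bounded (w : nat -> C) (K : C) :
  (forall n, `|w n| <= K) -> conv (fun n => n%:R^-1 * w n) 0.
Proof.
move=> wK e e0; have K0 : 0 <= K by apply: le_trans (wK 0%N).
have [N HN] : exists N : nat, K / e < N%:R.
  by apply: complete_reals_archimedean; rewrite rpredM ?rpredV ?ger0_real // ltW.
exists N.+1 => n ltNn; have n0 : (0 : C) < n%:R by rewrite ltr0n (leq_trans _ ltNn).
rewrite subr0 normrM normfV normr_nat ltr_pdivrMl //.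
apply: le_lt_trans (wK n) _; rewrite ltr_pdivrMr // in HN.
by apply: lt_le_trans HN _; rewrite ler_pM2r // ler_nat ltnW.
Qed.

Lemma cesaro_geometric (x : C) :
  `|x| = 1 -> conv (fun n => n%:R^-1 * \sum_(1 <= j < n.+1) x ^+ j) (x == 1)%:R.
Proof.
move=> x_norm1; have [->|x_neq1] := eqVneq x 1.
  apply: (conv_eq_from (N := 1)) (conv_cst _) => n n_gt0.
  rewrite (eq_bigr (fun=> 1)) => [|j _]; last exact: expr1n.
  by rewrite sumr_const_nat subn1 mulVf // pnatr_eq0 -lt0n.
have x1_neq0 : x - 1 != 0 by rewrite subr_eq0.
apply: (conv_divn_bounded (K := 2%:R / `|x - 1|)) => n.
have -> : \sum_(1 <= j < n.+1) x ^+ j = (x ^+ n.+1 - x) / (x - 1).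
  apply: (canRL (mulfK x1_neq0)); rewrite mulr_suml.
  rewrite (eq_bigr (fun j => x ^+ j.+1 - x ^+ j)) => [|j _]; last first.
    by rewrite mulrBr mulr1 exprSr.
  by rewrite telescope_sumr // expr1.
rewrite normrM normfV ler_wpM2r ?invr_ge0 //.
by apply: le_trans (ler_normB _ _) _; rewrite normrX x_norm1 expr1n.
Qed.

End Convergence.

Section Adjoint.
Local Open Scope sesquilinear_scope.
Variable C : numClosedFieldType.

Lemma adjmx_trC m n (M : 'M[C]_(m, n)) : adjmx M = M ^t* .
Proof. by rewrite /adjmx map_trmx. Qed.

Lemma adjmxE m n (M : 'M[C]_(m, n)) i j : adjmx M i j = (M j i)^*.
Proof. by rewrite /adjmx !mxE. Qed.

Lemma adjmxK m n (M : 'M[C]_(m, n)) : adjmx (adjmx M) = M.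
Proof. by apply/matrixP => i j; rewrite !adjmxE conjCK. Qed.

Lemma adjmxM m n p (M : 'M[C]_(m, n)) (N : 'M[C]_(n, p)) :
  adjmx (M *m N) = adjmx N *m adjmx M.
Proof. by rewrite /adjmx map_mxM trmx_mul. Qed.

Lemma adjmx1 n : adjmx (1%:M : 'M[C]_n) = 1%:M.
Proof. by rewrite /adjmx map_mx1 trmx1. Qed.

Lemma adjmx_diag n (v : 'rV[C]_n) : adjmx (diag_mx v) = diag_mx (map_mx Num.conj v).
Proof. by rewrite /adjmx map_diag_mx tr_diag_mx. Qed.

Lemma unitmx_adj n (M : 'M[C]_n) : (adjmx M \in unitmx) = (M \in unitmx).
Proof. by rewrite /adjmx unitmx_tr map_unitmx. Qed.

Lemma adjmxV n (M : 'M[C]_n) : adjmx (invmx M) = invmx (adjmx M).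
Proof. by rewrite /adjmx map_invmx trmx_inv. Qed.

Lemma invmx_mulmx_adj n (S : 'M[C]_n) : S \in unitmx ->
  invmx (S *m adjmx S) = adjmx (invmx S) *m invmx S.
Proof.
move=> S_unit; have SS_unit : S *m adjmx S \in unitmx.
  by rewrite unitmx_mul unitmx_adj S_unit.
rewrite -[RHS](mulKmx SS_unit) adjmxV -mulmxA (mulmxA (adjmx S)).
by rewrite mulmxV ?unitmx_adj // mul1mx mulmxV // mulmx1.
Qed.

Lemma sum_col_normr2 m n (M : 'M[C]_(m, n)) j :
  \sum_i `|M i j| ^+ 2 = (adjmx M *m M) j j.
Proof. by rewrite mxE; apply: eq_bigr => i _; rewrite adjmxE normCKC. Qed.

End Adjoint.

Lemma char_poly_similar (R : fieldType) n (S M : 'M[R]_n) : S \in unitmx ->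
  char_poly (invmx S *m M *m S) = char_poly M.
Proof.
move=> Su; have char_mx_similar : char_poly_mx (invmx S *m M *m S) =
    map_mx polyC (invmx S) *m char_poly_mx M *m map_mx polyC S.
  rewrite /char_poly_mx mulmxBr mulmxBl !map_mxM.
  have -> : map_mx polyC (invmx S) *m 'X%:M *m map_mx polyC S = 'X%:M.
    by rewrite scalar_mxC -mulmxA -map_mxM mulVmx // map_mx1 mulmx1.
  by [].
rewrite /char_poly char_mx_similar !det_mulmx !det_map_mx mulrC mulrA.
by rewrite -rmorphM -det_mulmx mulmxV // det1 rmorph1 mul1r.
Qed.

Lemma eq_sum_prod_XsubC (F : fieldType) (V : nmodType) n (t u : 'I_n -> F)
    (f : F -> V) :
  \prod_i ('X - (t i)%:P) = \prod_i ('X - (u i)%:P) -> \sum_i f (t i) = \sum_i f (u i).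
Proof.
move=> eq_tu; rewrite -(big_map t xpredT f) -(big_map u xpredT f).
by apply: perm_big; apply: prod_XsubC_eq; rewrite !big_map.
Qed.

Lemma closed_prim_root_exists (F : closedFieldType) n :
  (0 < n)%N -> n%:R != 0 :> F -> exists z : F, n.-primitive_root z.
Proof.
move=> n_gt0 n_neq0; have [r Dp] := closed_field_poly_normal ('X^n - 1 : {poly F}).
rewrite (monicP _) ?monicXnsubC // scale1r in Dp.
have r_roots : all n.-unity_root r by apply/allP => z; rewrite -root_prod_XsubC -Dp.
have size_r : (n <= size r)%N by rewrite -ltnS -(size_prod_XsubC r id) -Dp size_XnsubC.
have [|z _] := hasP (has_prim_root n_gt0 r_roots _ size_r); last by exists z.
by rewrite -separable_prod_XsubC -Dp separable_Xn_sub_1.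
Qed.

Lemma sum_expr_unity_root (R : idomainType) n (x : R) :
  x ^+ n = 1 -> x != 1 -> \sum_(k < n) x ^+ k = 0.
Proof.
move=> xn1 x_neq1; have /esym/eqP := subrX1 x n.
by rewrite xn1 subrr mulf_eq0 subr_eq0 (negbTE x_neq1) => /eqP.
Qed.

Section Unimodular.
Variable C : numClosedFieldType.
Implicit Types x y : C.

Lemma conjC_norm1 x : `|x| = 1 -> x^* = x^-1.
Proof. by move=> x1; rewrite invC_norm x1 expr1n invr1 mul1r. Qed.

Lemma norm1_conjCM_eq1 x y : `|x| = 1 -> (x^* * y == 1) = (y == x).
Proof.
move=> x1; have x_neq0 : x != 0 by rewrite -normr_eq0 x1 oner_eq0.
by rewrite conjC_norm1 // -(inj_eq (mulfI x_neq0)) mulVKf // mulr1.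
Qed.

End Unimodular.

Section FourierMatrix.
Variables (C : numClosedFieldType) (d : nat) (w : C).
Hypothesis w_prim : d.-primitive_root w.

Lemma normr_prim_root : `|w| = 1.
Proof.
apply/eqP; rewrite -(pexpr_eq1 (prim_order_gt0 w_prim)) // -normrX.
by rewrite prim_expr_order // normr1.
Qed.

Lemma eq_prim_root_expr_ord (j l : 'I_d) : (w ^+ j == w ^+ l) = (j == l).
Proof. by rewrite (eq_prim_root_expr w_prim) !modn_small. Qed.

Definition fourier_mx : 'M[C]_d := \matrix_(j, k) ((sqrtC d%:R)^-1 * w ^+ (j * k)).

Lemma fourier_mx_unitary : fourier_mx *m adjmx fourier_mx = 1%:M.
Proof.
apply/matrixP => j l; rewrite !mxE.
set x := (w ^+ l)^* * w ^+ j.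
have coefE k : fourier_mx j k * adjmx fourier_mx k l = d%:R^-1 * x ^+ k.
  have c_real : (sqrtC d%:R)^-1 \is @Num.real C by rewrite realV sqrtC_real ?ler0n.
  rewrite adjmxE !mxE rmorphM /= (CrealP c_real) /x exprMn !rmorphXn /= -!exprM.
  by rewrite mulrACA -expr2 exprVn sqrtCK; congr (_ * _); apply: mulrC.
rewrite (eq_bigr _ (fun k _ => coefE k)) -mulr_sumr.
have w_norm1 k : `|w ^+ k| = 1 by rewrite normrX normr_prim_root expr1n.
have [eq_jl|neq_jl] := eqVneq j l.
  rewrite /x eq_jl -normCKC w_norm1 expr1n (eq_bigr (fun=> 1)) => [|k _].
    by rewrite sumr_const card_ord mulVf // pnatr_eq0 -lt0n (prim_order_gt0 w_prim).
  exact: expr1n.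
rewrite mulr0n sum_expr_unity_root ?mulr0 //.
  rewrite exprMn -rmorphXn /= -!exprM !(mulnC _ d) !exprM (prim_expr_order w_prim).
  by rewrite !expr1n rmorph1 mulr1.
by rewrite /x norm1_conjCM_eq1 // eq_prim_root_expr_ord.
Qed.

Lemma normr_fourier_mx2 j k : `|fourier_mx j k| ^+ 2 = d%:R^-1.
Proof.
rewrite mxE normrM normrX normr_prim_root expr1n mulr1 normfV.
by rewrite ger0_norm ?sqrtC_ge0 ?ler0n // exprVn sqrtCK.
Qed.

Lemma fourier_conj_diag (v : 'rV[C]_d) k :
  (adjmx fourier_mx *m diag_mx v *m fourier_mx) k k = d%:R^-1 * \sum_i v 0 i.
Proof.
rewrite mxE mulr_sumr; apply: eq_bigr => i _.
rewrite mul_mx_diag mxE adjmxE -mulrA mulrC -mulrA -normCK normr_fourier_mx2.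
by rewrite mulrC.
Qed.

End FourierMatrix.

Section PositiveDefinite.
Variables (C : numClosedFieldType) (d : nat) (A : 'M[C]_d).
Hypothesis A_posdef : positive_definite A.

Let P := spectralmx A.
Let D := spectral_diag A.

Lemma mulmx_spectral_adj : P *m adjmx P = 1%:M.
Proof. by rewrite adjmx_trC; apply/unitarymxP; apply: spectral_unitarymx. Qed.

Lemma mulmx_adj_spectral : adjmx P *m P = 1%:M.
Proof. exact: mulmx1C mulmx_spectral_adj. Qed.

Lemma posdef_spectral : A = adjmx P *m diag_mx D *m P.
Proof.
have A_herm : A \is hermsymmx.
  by apply/is_hermitianmxP; rewrite expr0 scale1r -adjmx_trC; case: A_posdef.
have /orthomx_spectralP -> := hermitian_normalmx A_herm.
by rewrite invmx_unitary ?spectral_unitarymx // -adjmx_trC.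
Qed.

Lemma spectral_diag_posdef_gt0 i : 0 < D 0 i.
Proof.
pose x : 'cV[C]_d := adjmx P *m delta_mx i 0.
have x_neq0 : x != 0.
  apply/eqP => /(congr1 (mulmx P)); rewrite mulmxA mulmx_spectral_adj mul1mx mulmx0.
  by move/matrixP/(_ i 0); rewrite !mxE !eqxx => /eqP; rewrite oner_eq0.
have := A_posdef.2 x x_neq0.
rewrite adjmxM adjmxK {1}posdef_spectral !mulmxA -(mulmxA _ P) mulmx_spectral_adj.
rewrite mulmx1 -(mulmxA _ P) mulmx_spectral_adj mulmx1.
have -> : adjmx (delta_mx i 0 : 'cV[C]_d) = delta_mx 0 i.
  by apply/matrixP => a b; rewrite adjmxE !mxE rmorph_nat andbC.
by rewrite -rowE -colE !mxE eqxx.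
Qed.

Let Dinv : 'rV[C]_d := \row_i (D 0 i)^-1.

Lemma posdef_mulmx_inv : A *m (adjmx P *m diag_mx Dinv *m P) = 1%:M.
Proof.
have D_Dinv : diag_mx D *m diag_mx Dinv = 1%:M.
  rewrite mulmx_diag -diag_const_mx; congr diag_mx; apply/rowP => i.
  by rewrite !mxE mulfV // gt_eqF ?spectral_diag_posdef_gt0.
rewrite {1}posdef_spectral !mulmxA -(mulmxA _ P) mulmx_spectral_adj mulmx1.
by rewrite -(mulmxA _ (diag_mx D)) D_Dinv mulmx1 mulmx_adj_spectral.
Qed.

Lemma posdef_unitmx : A \in unitmx.
Proof. by have [] := mulmx1_unit posdef_mulmx_inv. Qed.

Lemma invmx_posdef : invmx A = adjmx P *m diag_mx Dinv *m P.
Proof. by rewrite -[RHS](mulKmx posdef_unitmx) posdef_mulmx_inv mulmx1. Qed.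

Lemma trace_invmx_posdef : \tr (invmx A) = \sum_i (D 0 i)^-1.
Proof.
rewrite invmx_posdef mxtrace_mulC mulmxA mulmx_spectral_adj mul1mx mxtrace_diag.
by apply: eq_bigr => i _; rewrite mxE.
Qed.

Lemma char_poly_posdef : char_poly A = \prod_i ('X - (D 0 i)%:P).
Proof.
have adjP : adjmx P = invmx P.
  by rewrite -[LHS]mul1mx -(mulVmx (spectral_unit A)) -mulmxA mulmx_spectral_adj mulmx1.
rewrite posdef_spectral adjP char_poly_similar ?spectral_unit //.
rewrite char_poly_trig ?diag_mx_is_trig //.
by apply: eq_bigr => i _; rewrite mxE eqxx mulr1n.
Qed.

Lemma sum_inv_eigen_posdef (t : 'I_d -> C) :
  char_poly A = \prod_i ('X - (t i)%:P) -> \sum_i (t i)^-1 = \tr (invmx A).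
Proof.
rewrite trace_invmx_posdef char_poly_posdef => /esym eq_Dt.
exact: (eq_sum_prod_XsubC _ eq_Dt).
Qed.

Lemma posdef_inv_balanced_factor (w : C) : d.-primitive_root w ->
  exists S : 'M[C]_d, S *m adjmx S = invmx A /\
    forall j, \sum_i `|S i j| ^+ 2 = d%:R^-1 * \tr (invmx A).
Proof.
move=> w_prim; pose r : 'rV[C]_d := \row_i sqrtC (D 0 i)^-1.
have r_conj : diag_mx r *m diag_mx (map_mx Num.conj r) = diag_mx Dinv.
  rewrite mulmx_diag; congr diag_mx; apply/rowP => i; rewrite !mxE.
  have Dinv_ge0 : 0 <= (D 0 i)^-1 by rewrite invr_ge0 ltW ?spectral_diag_posdef_gt0.
  have sqrt_ge0 : 0 <= sqrtC (D 0 i)^-1 by rewrite sqrtC_ge0.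
  by rewrite (CrealP (ger0_real sqrt_ge0)) -expr2 sqrtCK.
exists (adjmx P *m diag_mx r *m fourier_mx d w); split.
  rewrite !adjmxM adjmxK adjmx_diag invmx_posdef -r_conj !mulmxA.
  by rewrite -(mulmxA _ (fourier_mx d w)) (fourier_mx_unitary w_prim) mulmx1.
move=> j; rewrite sum_col_normr2 !adjmxM adjmxK adjmx_diag !mulmxA.
rewrite -(mulmxA _ P) mulmx_spectral_adj mulmx1 -(mulmxA _ _ (diag_mx r)).
rewrite diag_mxC r_conj (fourier_conj_diag w_prim) trace_invmx_posdef.
by congr (_ * _); apply: eq_bigr => i _; rewrite mxE.
Qed.

End PositiveDefinite.

Lemma unit_columns_factor (C : numClosedFieldType) d (A : 'M[C]_d) (w : C) :
  positive_definite A -> d.-primitive_root w -> \tr (invmx A) = d%:R ->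
  exists S : 'M[C]_d, [/\ S \in unitmx,
    (forall j, \sum_i `|S i j| ^+ 2 = 1) & A = invmx (S *m adjmx S)].
Proof.
move=> A_posdef w_prim trA.
have [S [S_fact S_cols]] := posdef_inv_balanced_factor A_posdef w_prim.
exists S; split; last by rewrite S_fact invmxK.
  have : S *m adjmx S \in unitmx by rewrite S_fact unitmx_inv posdef_unitmx.
  by rewrite unitmx_mul => /andP[].
by move=> j; rewrite S_cols trA mulVf // pnatr_eq0 -lt0n (prim_order_gt0 w_prim).
Qed.

Section EuclideanNorm.
Variables (C : numClosedFieldType) (d : nat).
Implicit Types x : 'cV[C]_d.

Lemma vnorm_ge0 x : 0 <= vnorm x.
Proof. by rewrite sqrtC_ge0 sumr_ge0 // => i _; rewrite exprn_ge0. Qed.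

Lemma normr_le_vnorm x i : `|x i 0| <= vnorm x.
Proof.
rewrite -(sqrCK (normr_ge0 (x i 0))) ler_sqrtC ?nnegrE ?exprn_ge0 //.
  by rewrite (bigD1 i) //= lerDl sumr_ge0 // => j _; rewrite exprn_ge0.
by rewrite sumr_ge0 // => j _; rewrite exprn_ge0.
Qed.

Lemma vnorm_le_sum x : vnorm x <= \sum_i `|x i 0|.
Proof.
have sum_ge0 : 0 <= \sum_i `|x i 0| by rewrite sumr_ge0.
rewrite -(sqrCK sum_ge0) ler_sqrtC ?nnegrE ?exprn_ge0 //; last first.
  by rewrite sumr_ge0 // => j _; rewrite exprn_ge0.
rewrite expr2 big_distrl /=; apply: ler_sum => i _.
rewrite big_distrr /= (bigD1 i) //= expr2 lerDl.
by rewrite sumr_ge0 // => j _; rewrite mulr_ge0.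
Qed.

Lemma vnorm_delta k : vnorm (delta_mx k 0 : 'cV[C]_d) = 1.
Proof.
rewrite /vnorm (bigD1 k) //= big1 => [|j /negbTE neq_jk]; last first.
  by rewrite mxE neq_jk normr0 expr0n.
by rewrite addr0 mxE !eqxx normr1 expr1n sqrtC1.
Qed.

Lemma vnorm_mulmx (M : 'M[C]_d) x :
  vnorm (M *m x) <= (\sum_i \sum_j `|M i j|) * vnorm x.
Proof.
apply: le_trans (vnorm_le_sum _) _; rewrite mulr_suml; apply: ler_sum => i _.
rewrite mxE mulr_suml; apply: le_trans (ler_norm_sum _ _ _) _.
by apply: ler_sum => j _; rewrite normrM ler_wpM2l ?normr_le_vnorm.
Qed.

Lemma power_bounded_entries (T : 'M[C]_d) :
  power_bounded T -> exists M, forall n i k, `|(T ^+ n) i k| <= M.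
Proof.
move=> [M T_bound]; exists M => n i k.
have := T_bound n (delta_mx k 0); rewrite vnorm_delta mulr1; apply: le_trans.
rewrite -colE (_ : (T ^+ n) i k = col k (T ^+ n) i 0); first exact: normr_le_vnorm.
by rewrite mxE.
Qed.

End EuclideanNorm.

Section CesaroInvariance.
Variables (C : numClosedFieldType) (d : nat) (T : 'M[C]_d).

Let gram j := adjmx (T ^+ j) *m T ^+ j.

Lemma cesaro_mean_telescope n :
  adjmx T *m cesaro_mean T n *m T - cesaro_mean T n = n%:R^-1 *: (gram n.+1 - gram 1).
Proof.
rewrite /cesaro_mean -scalemxAr -scalemxAl -scalerBr; congr (_ *: _).
rewrite mulmx_sumr mulmx_suml -sumrB (eq_bigr (fun j => gram j.+1 - gram j)).
  by rewrite telescope_sumr.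
by move=> j _; rewrite /gram exprSr -mulmxE adjmxM !mulmxA.
Qed.

Hypothesis hC : complete_reals C.
Hypothesis T_pb : power_bounded T.
Variable A : 'M[C]_d.
Hypothesis T_A : is_cesaro_limit T A.

Lemma cesaro_limit_invariant : adjmx T *m A *m T = A.
Proof.
apply/matrixP => i j; apply/eqP; rewrite -subr_eq0; apply/eqP.
pose u n := (adjmx T *m cesaro_mean T n *m T - cesaro_mean T n) i j.
have u_lim : conv u ((adjmx T *m A *m T) i j - A i j).
  apply: (conv_eq_from (N := 0)) (convD (mx_conv_mul _ _ T_A i j) (convN (T_A i j))).
  by move=> n _; rewrite /u !mxE.
have [M T_bound] := power_bounded_entries T_pb.
have [K gram_bound] : exists K, forall n i j, `|gram n i j| <= K.
  exists (\sum_(k < d) M * M) => n a b; rewrite mxE.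
  apply: le_trans (ler_norm_sum _ _ _) _; apply: ler_sum => k _.
  by rewrite normrM adjmxE norm_conjC ler_pM.
have u0 : conv u 0.
  apply: (conv_eq_from (u := fun n => n%:R^-1 * (gram n.+1 i j - gram 1 i j)) (N := 0)).
    by move=> n _; rewrite /u cesaro_mean_telescope !mxE.
  apply: (conv_divn_bounded hC (K := K + K)) => n.
  by apply: le_trans (ler_normB _ _) _; rewrite lerD.
exact: conv_unique u_lim u0.
Qed.

Hypothesis A_unit : A \in unitmx.

Lemma cesaro_limit_inv_invariant j : T ^+ j *m invmx A *m adjmx (T ^+ j) = invmx A.
Proof.
have T_Ainv : T *m invmx A *m adjmx T = invmx A.
  have : invmx A *m adjmx T *m A *m T = 1%:M.
    by rewrite -(mulmxA _ A) -mulmxA (mulmxA (adjmx T)) cesaro_limit_invariant mulVmx.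
  by move/mulmx1C => h; rewrite -[RHS]mul1mx -h !mulmxA mulmxK.
elim: j => [|j IHj]; first by rewrite expr0 adjmx1 mul1mx mulmx1.
rewrite exprS -mulmxE adjmxM !mulmxA -(mulmxA T) -(mulmxA _ _ (adjmx (T ^+ j))).
by rewrite IHj T_Ainv.
Qed.

Lemma trace_invmx_cesaro_limit : \tr (invmx A) = d%:R.
Proof.
have tr_gram j : \tr (invmx A *m gram j) = \tr (invmx A).
  by rewrite mulmxA mxtrace_mulC mulmxA cesaro_limit_inv_invariant.
have tr_mean n : (0 < n)%N -> \tr (invmx A *m cesaro_mean T n) = \tr (invmx A).
  move=> n_gt0; rewrite -scalemxAr mxtraceZ mulmx_sumr raddf_sum /=.
  rewrite (eq_bigr _ (fun j _ => tr_gram j)) sumr_const_nat subn1 /=.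
  by rewrite -(mulr_natl (\tr _)) mulrA mulVf ?mul1r // pnatr_eq0 -lt0n.
have := conv_sum (fun k => mx_conv_mul (invmx A) 1%:M T_A k k).
rewrite mulmx1 mulVmx // -/(mxtrace _) mxtrace1; apply: conv_unique.
apply: (conv_eq_from (N := 1)) (conv_cst _) => n n_gt0.
by rewrite -/(mxtrace _) mulmx1 tr_mean.
Qed.

End CesaroInvariance.

Lemma exprmx_similar (R : comUnitRingType) n (S M : 'M[R]_n) k : S \in unitmx ->
  (S *m M *m invmx S) ^+ k = S *m M ^+ k *m invmx S.
Proof.
move=> S_unit; elim: k => [|k IHk]; first by rewrite !expr0 mulmx1 mulmxV.
rewrite exprSr IHk -!mulmxE -!mulmxA (mulmxA (invmx S)) mulVmx // mul1mx.
by rewrite exprSr -mulmxE !mulmxA.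
Qed.

Lemma diag_mxX (R : pzRingType) n (v : 'rV[R]_n) k :
  diag_mx v ^+ k = diag_mx (\row_i v 0 i ^+ k).
Proof.
elim: k => [|k IHk]; rewrite ?exprSr ?IHk -?mulmxE ?mulmx_diag.
  by apply/matrixP => i j; rewrite !mxE expr0.
by congr diag_mx; apply/rowP => i; rewrite !mxE exprSr.
Qed.

Section UnimodularSimilarity.
Variables (C : numClosedFieldType) (d : nat) (S : 'M[C]_d) (v : 'rV[C]_d).
Hypothesis S_unit : S \in unitmx.
Hypothesis v_norm1 : forall k, `|v 0 k| = 1.

Let T := S *m diag_mx v *m invmx S.

Lemma exprmx_similar_diag n : T ^+ n = S *m diag_mx (\row_k v 0 k ^+ n) *m invmx S.
Proof. by rewrite exprmx_similar // diag_mxX. Qed.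

Lemma power_bounded_similar_unimodular : power_bounded T.
Proof.
exists (\sum_i \sum_j \sum_k `|S i k| * `|invmx S k j|) => n x.
apply: le_trans (vnorm_mulmx _ _) _; rewrite ler_wpM2r ?vnorm_ge0 //.
apply: ler_sum => i _; apply: ler_sum => j _.
rewrite exprmx_similar_diag mxE; apply: le_trans (ler_norm_sum _ _ _) _.
apply: ler_sum => k _; rewrite mul_mx_diag !mxE !normrM normrX v_norm1 expr1n.
by rewrite mulr1.
Qed.

Lemma C1dot_similar_unimodular : class_C1dot T.
Proof.
move=> x x_H0; pose y := invmx S *m x.
suff y0 : y = 0 by rewrite -(mulKVmx S_unit x) -/y y0 mulmx0.
apply/matrixP => k c; rewrite ord1 [RHS]mxE {c}.
have entry_lim i : conv (fun n => (T ^+ n *m x) i 0) 0.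
  by apply: (conv0_le x_H0) => n; rewrite (ger0_norm (vnorm_ge0 _)) normr_le_vnorm.
have y_lim : conv (fun n => v 0 k ^+ n * y k 0) 0.
  have := conv_sum (fun i => convMl (invmx S k i) (entry_lim i)).
  rewrite big1 => [|i _]; last exact: mulr0.
  apply: (conv_eq_from (N := 0)) => n _.
  have -> : \sum_i invmx S k i * (T ^+ n *m x) i 0 = (invmx S *m (T ^+ n *m x)) k 0.
    by rewrite mxE.
  by rewrite exprmx_similar_diag -!mulmxA mulKmx // mul_diag_mx !mxE.
apply/eqP; rewrite -normr_eq0; apply: contraT => y_neq0.
have y_gt0 : 0 < `|y k 0| by rewrite lt_def y_neq0 normr_ge0.
have [N /(_ N (leqnn N))] := y_lim _ y_gt0.
by rewrite subr0 normrM normrX v_norm1 expr1n mul1r ltxx.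
Qed.

Hypothesis hC : complete_reals C.
Hypothesis v_inj : injective (fun k => v 0 k).

Let gram := adjmx S *m S.
Let diag_pow j := diag_mx (\row_k v 0 k ^+ j).
Let inner_mean n :=
  n%:R^-1 *: \sum_(1 <= j < n.+1) adjmx (diag_pow j) *m gram *m diag_pow j.

Lemma cesaro_mean_similar_unimodular n :
  cesaro_mean T n = adjmx (invmx S) *m inner_mean n *m invmx S.
Proof.
rewrite /cesaro_mean -scalemxAr -scalemxAl; congr (_ *: _).
rewrite mulmx_sumr mulmx_suml; apply: eq_bigr => j _.
by rewrite exprmx_similar_diag !adjmxM !mulmxA.
Qed.

Lemma cesaro_limit_similar_unimodular :
  is_cesaro_limit T (adjmx (invmx S) *m diag_mx (\row_k gram k k) *m invmx S).
Proof.
have inner_lim : mx_conv inner_mean (diag_mx (\row_k gram k k)).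
  move=> k l; pose x := (v 0 k)^* * v 0 l.
  have x_norm1 : `|x| = 1 by rewrite normrM norm_conjC !v_norm1 mulr1.
  have lim_kl : diag_mx (\row_k gram k k) k l = gram k l * (x == 1)%:R.
    rewrite /x norm1_conjCM_eq1 // (inj_eq v_inj) !mxE eq_sym.
    by case: eqVneq => [->|_]; rewrite ?mulr1 ?mulr0.
  rewrite lim_kl; apply: (conv_eq_from (N := 0)) (convMl _ (cesaro_geometric hC x_norm1)).
  move=> n _; rewrite mulrC -mulrA [RHS]mxE summxE mulr_suml; congr (_ * _).
  apply: eq_bigr => j _.
  rewrite /diag_pow adjmx_diag mul_mx_diag mul_diag_mx !mxE rmorphXn /= exprMn.
  by rewrite mulrAC.
move=> i j; apply: (conv_eq_from (N := 0)) (mx_conv_mul _ _ inner_lim i j) => n _.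
by rewrite cesaro_mean_similar_unimodular.
Qed.

End UnimodularSimilarity.

Lemma C11_similar_unimodular (C : numClosedFieldType) d (S : 'M[C]_d) (v : 'rV[C]_d) :
  S \in unitmx -> (forall k, `|v 0 k| = 1) -> class_C11 (S *m diag_mx v *m invmx S).
Proof.
move=> S_unit v_norm1; split; first exact: C1dot_similar_unimodular.
rewrite /class_Cdot1; pose S' := invmx (adjmx S).
have S'_unit : S' \in unitmx by rewrite unitmx_inv unitmx_adj.
have -> : adjmx (S *m diag_mx v *m invmx S) =
    S' *m diag_mx (map_mx Num.conj v) *m invmx S'.
  by rewrite !adjmxM adjmx_diag adjmxV /S' invmxK !mulmxA.
by apply: C1dot_similar_unimodular => // k; rewrite mxE norm_conjC.
Qed.

Lemma cesaro_limit_unit_columns (C : numClosedFieldType) (hC : complete_reals C) d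
    (w : C) (S : 'M[C]_d) :
  d.-primitive_root w -> S \in unitmx -> (forall j, \sum_i `|S i j| ^+ 2 = 1) ->
  exists T, [/\ power_bounded T, class_C11 T
    & is_cesaro_limit T (invmx (S *m adjmx S))].
Proof.
move=> w_prim S_unit S_cols; pose v : 'rV[C]_d := \row_k w ^+ k.
have v_norm1 k : `|v 0 k| = 1 by rewrite mxE normrX (normr_prim_root w_prim) expr1n.
have v_inj : injective (fun k => v 0 k).
  by move=> k l; rewrite !mxE => /eqP; rewrite eq_prim_root_expr_ord // => /eqP.
exists (S *m diag_mx v *m invmx S); split.
- exact: power_bounded_similar_unimodular.
- exact: C11_similar_unimodular.
have gram_diag1 : \row_k (adjmx S *m S) k k = const_mx 1.
  by apply/rowP => k; rewrite mxE -sum_col_normr2 S_cols mxE.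
have := cesaro_limit_similar_unimodular S_unit v_norm1 hC v_inj.
by rewrite gram_diag1 diag_const_mx mulmx1 -invmx_mulmx_adj.
Qed.

Unset Implicit Arguments.

Theorem mainTheorem7 (C : numClosedFieldType) (hC : complete_reals C)
  (d : nat) (hd : (2 <= d)%N) (A : 'M[C]_d) (hA : positive_definite A)
  (t : 'I_d -> C) (ht : char_poly A = \prod_(i < d) ('X - (t i)%:P)) :
  [/\ (exists T : 'M[C]_d, [/\ power_bounded T, class_C11 T & is_cesaro_limit T A])
      <-> \sum_(i < d) (t i)^-1 = d%:R,
      \sum_(i < d) (t i)^-1 = d%:R <->
      (exists S : 'M[C]_d, [/\ S \in unitmx,
          (forall j : 'I_d, \sum_(i < d) `|S i j| ^+ 2 = 1) &
          A = invmx (S *m adjmx S)])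
    & (exists S : 'M[C]_d, [/\ S \in unitmx,
          (forall j : 'I_d, \sum_(i < d) `|S i j| ^+ 2 = 1) &
          A = invmx (S *m adjmx S)])
      <-> (exists T : 'M[C]_d, [/\ power_bounded T, class_C11 T & is_cesaro_limit T A])].
Proof.
have d_gt0 : (0 < d)%N := ltnW hd.
have [w w_prim] : exists w : C, d.-primitive_root w.
  by apply: closed_prim_root_exists; rewrite // pnatr_eq0 -lt0n.
rewrite (sum_inv_eigen_posdef hA ht).
have i_ii : (exists T, [/\ power_bounded T, class_C11 T & is_cesaro_limit T A]) ->
    \tr (invmx A) = d%:R.
  move=> [T [T_pb _ T_A]].
  exact: (trace_invmx_cesaro_limit hC T_pb T_A (posdef_unitmx hA)).
have ii_iii := unit_columns_factor hA w_prim.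
have iii_i : (exists S : 'M[C]_d, [/\ S \in unitmx,
    (forall j, \sum_i `|S i j| ^+ 2 = 1) & A = invmx (S *m adjmx S)]) ->
    exists T, [/\ power_bounded T, class_C11 T & is_cesaro_limit T A].
  move=> [S [S_unit S_cols ->]].
  exact: (cesaro_limit_unit_columns hC w_prim S_unit S_cols).
by split; split; [move/i_ii | move/ii_iii/iii_i | move/ii_iii | move/iii_i/i_ii
  | move/iii_i | move/i_ii/ii_iii].
Qed.
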